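(* In the setting below, let $(x_f,y_f,\theta_f)$ be any goal pose. Consider a $4\pi$-arc $LSL$ path reaching this goal pose whose travel time is minimal among all $4\pi$-arc $LSL$ paths reaching it. It satisfies $\alpha+\gamma<4\pi$. The same holds for $RSR$: a $4\pi$-arc $RSR$ path reaching the goal pose whose travel time is minimal among all $4\pi$-arc $RSR$ paths reaching it satisfies $\alpha+\gamma<4\pi$.
   Context: Setting: a vehicle moves in the plane at unit speed with minimum turning radius $r>0$, in a steady current $(w_x,w_y)$ with speed $v_w=\sqrt{w_x^2+w_y^2}\in(0,1)$. The start pose is $(0,0,0)$ and the goal pose is $(x_f,y_f,\theta_f)$ with $\theta_f\in[0,2\pi)$. An $LSL$ path has parameters $(\alpha,\beta,\gamma)$ with $\alpha,\gamma\ge0$ and $\beta\ge0$: a left arc of angle $\alpha$ of radius $r$, a straight segment of length $\beta$, and a left arc of angle $\gamma$, in the frame moving with the current. Its travel time is $T=r(\alpha+\gamma)+\beta$. It reaches the goal iff for some $k\in\mathbb{Z}$: $\alpha+\gamma=2k\pi+\theta_f$, $x_f-w_xT=r\sin\theta_f+\beta\cos\alpha$, and $y_f-w_yT=r(1-\cos\theta_f)+\beta\sin\alpha$. An $RSR$ path is the analogous path with right arcs, with $T=r(\alpha+\gamma)+\beta$. It reaches the goal iff for some $k\in\mathbb{Z}$: $-\alpha-\gamma=2k\pi+\theta_f$, $x_f-w_xT=-r\sin\theta_f+\beta\cos\alpha$, and $y_f-w_yT=-r(1-\cos\theta_f)-\beta\sin\alpha$. A path is a $4\pi$-arc path if $\alpha,\gamma\in[0,4\pi)$.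 *)

From Stdlib Require Import Reals ZArith.
Open Scope R_scope.

Definition travel_time (r alpha beta gamma : R) : R := r * (alpha + gamma) + beta.

(* LSL path (alpha, beta, gamma) reaches goal (xf, yf, thf) in current (wx, wy). *)
Definition LSL_reaches (r wx wy xf yf thf alpha beta gamma : R) : Prop :=
  0 <= alpha /\ 0 <= beta /\ 0 <= gamma /\
  exists k : Z,
    alpha + gamma = 2 * IZR k * PI + thf /\
    xf - wx * travel_time r alpha beta gamma = r * sin thf + beta * cos alpha /\
    yf - wy * travel_time r alpha beta gamma = r * (1 - cos thf) + beta * sin alpha.

Definition RSR_reaches (r wx wy xf yf thf alpha beta gamma : R) : Prop :=
  0 <= alpha /\ 0 <= beta /\ 0 <= gamma /\
  exists k : Z,
    - alpha - gamma = 2 * IZR k * PI + thf /\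
    xf - wx * travel_time r alpha beta gamma = - r * sin thf + beta * cos alpha /\
    yf - wy * travel_time r alpha beta gamma = - r * (1 - cos thf) - beta * sin alpha.

Definition four_pi_arc (alpha gamma : R) : Prop :=
  0 <= alpha < 4 * PI /\ 0 <= gamma < 4 * PI.

Definition setting (r wx wy thf : R) : Prop :=
  0 < r /\ 0 < sqrt (wx ^ 2 + wy ^ 2) < 1 /\ 0 <= thf < 2 * PI.

From Stdlib Require Import Reals ZArith Lra Psatz.
Open Scope R_scope.

(* If alpha + gamma >= 4 pi, drop one full turn from the arcs, saving 2 pi r of
   arc time.  In the frame of the current the straight segment must then reach a
   point q at the distance d it covers while drifting, i.e. |q - w d| = d.  At
   d = beta + 2 pi r the old endpoint is only beta away, so, the drift speed being
   below 1, the root d is smaller than beta + 2 pi r and the new path is strictly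
   faster.  Its arc total alpha + gamma - 2 pi lies in [2 pi, 6 pi) and splits into
   two arcs in [0, 4 pi), the first pointing along the new segment. *)

Lemma unit_vector_angle c s :
  c ^ 2 + s ^ 2 = 1 -> exists a, 0 <= a <= 2 * PI /\ cos a = c /\ sin a = s.
Proof.
  intros Hunit.
  assert (Hc : -1 <= c <= 1) by nra.
  pose proof (acos_bound c) as Hbound.
  pose proof (cos_acos c Hc) as Hcos.
  pose proof (sin_acos c Hc) as Hsin.
  assert (Habs : sqrt (1 - c²) = Rabs s).
  { rewrite <- sqrt_Rsqr_abs. f_equal. unfold Rsqr. lra. }
  pose proof PI_RGT_0.
  destruct (Rle_dec 0 s) as [Hs | Hs].
  - exists (acos c). rewrite Hsin, Habs, Rabs_right; lra.
  - exists (2 * PI - acos c).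
    rewrite cos_minus, sin_minus, cos_2PI, sin_2PI, Hcos, Hsin, Habs, Rabs_left; lra.
Qed.

Lemma polar_form vx vy d :
  0 <= d -> vx ^ 2 + vy ^ 2 = d ^ 2 ->
  exists a, 0 <= a <= 2 * PI /\ vx = d * cos a /\ vy = d * sin a.
Proof.
  intros Hd Hnorm.
  destruct (Req_dec d 0) as [-> | Hd0].
  - exists 0. pose proof PI_RGT_0. split; [lra | nra].
  - destruct (unit_vector_angle (vx / d) (vy / d)) as (a & Ha & Hcos & Hsin).
    + field_simplify; [rewrite Hnorm; field |]; auto.
    + exists a. rewrite Hcos, Hsin. split; [exact Ha | split; field; auto].
Qed.

Lemma split_arc_total a0 S :
  0 <= a0 <= 2 * PI -> 2 * PI <= S < 6 * PI ->
  exists a g, four_pi_arc a g /\ a + g = S /\ cos a = cos a0 /\ sin a = sin a0.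
Proof.
  intros Ha0 HS. unfold four_pi_arc.
  destruct (Rlt_le_dec (S - a0) (4 * PI)).
  - exists a0, (S - a0). lra.
  - exists (a0 + 2 * PI), (S - a0 - 2 * PI).
    rewrite cos_plus, sin_plus, cos_2PI, sin_2PI. split; [lra | split; [ring | split; ring]].
Qed.

Lemma drift_distance_exists wx wy qx qy :
  wx ^ 2 + wy ^ 2 < 1 ->
  exists d, 0 <= d /\ (qx - wx * d) ^ 2 + (qy - wy * d) ^ 2 = d ^ 2.
Proof.
  intros Hw.
  set (m := wx ^ 2 + wy ^ 2). set (p := qx * wx + qy * wy). set (q := qx ^ 2 + qy ^ 2).
  assert (Hm : 0 < 1 - m) by (unfold m; lra).
  assert (Hdisc : 0 <= p ^ 2 + (1 - m) * q) by (unfold q; nra).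
  set (sq := sqrt (p ^ 2 + (1 - m) * q)).
  assert (Hsq : sq * sq = p ^ 2 + (1 - m) * q) by (apply sqrt_sqrt; exact Hdisc).
  assert (Hsq0 : 0 <= sq) by apply sqrt_pos.
  assert (Hpsq : p <= sq) by (unfold q in Hsq; nra).
  set (d := (sq - p) / (1 - m)).
  assert (Hd : (1 - m) * d = sq - p) by (unfold d; field; lra).
  exists d. split.
  - apply Rmult_le_pos; [lra | left; apply Rinv_0_lt_compat; lra].
  - assert (Hroot : (1 - m) * d ^ 2 + 2 * p * d - q = 0).
    { apply (Rmult_eq_reg_l (1 - m)); [| lra].
      replace ((1 - m) * ((1 - m) * d ^ 2 + 2 * p * d - q))
        with (((1 - m) * d) ^ 2 + 2 * p * ((1 - m) * d) - (1 - m) * q) by ring.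
      rewrite Hd. nra. }
    unfold m, p, q in Hroot. lra.
Qed.

(* [|q - w d| <= |q - w e| + |w| (d - e) < e + (d - e)]. *)
Lemma drift_distance_lt_mono wx wy qx qy e d :
  wx ^ 2 + wy ^ 2 <= 1 -> 0 <= e <= d ->
  (qx - wx * e) ^ 2 + (qy - wy * e) ^ 2 < e ^ 2 ->
  (qx - wx * d) ^ 2 + (qy - wy * d) ^ 2 < d ^ 2.
Proof.
  intros Hw He Hinside.
  set (ax := qx - wx * e). set (ay := qy - wy * e). set (t := d - e).
  fold ax ay in Hinside.
  assert (Hcs : (ax * wx + ay * wy) ^ 2 <= (ax ^ 2 + ay ^ 2) * (wx ^ 2 + wy ^ 2))
    by (pose proof (pow2_ge_0 (ax * wy - ay * wx)); nra).
  assert (Hdot : - e <= ax * wx + ay * wy) by nra.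
  replace (qx - wx * d) with (ax - wx * t) by (unfold ax, t; ring).
  replace (qy - wy * d) with (ay - wy * t) by (unfold ay, t; ring).
  replace d with (e + t) by (unfold t; ring).
  assert (0 <= t) by (unfold t; lra).
  nra.
Qed.

Lemma straight_segment_shorten r wx wy px py alpha beta gamma :
  0 < r -> wx ^ 2 + wy ^ 2 < 1 ->
  four_pi_arc alpha gamma -> 4 * PI <= alpha + gamma -> 0 <= beta ->
  px - wx * travel_time r alpha beta gamma = beta * cos alpha ->
  py - wy * travel_time r alpha beta gamma = beta * sin alpha ->
  exists a b g, four_pi_arc a g /\ 0 <= b /\ a + g = alpha + gamma - 2 * PI /\
    px - wx * travel_time r a b g = b * cos a /\
    py - wy * travel_time r a b g = b * sin a /\
    travel_time r a b g < travel_time r alpha beta gamma.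
Proof.
  unfold travel_time, four_pi_arc.
  intros Hr Hw Harc Hlong Hbeta Hx Hy.
  assert (Hturn : 0 < 2 * PI * r) by (pose proof PI_RGT_0; nra).
  set (S := alpha + gamma - 2 * PI).
  set (qx := px - wx * (r * S)). set (qy := py - wy * (r * S)).
  destruct (drift_distance_exists wx wy qx qy Hw) as (d & Hd & Hdist).
  assert (Hshorter : d < beta + 2 * PI * r).
  { apply Rnot_le_lt. intros Hge.
    assert (Hold : (qx - wx * (beta + 2 * PI * r)) ^ 2 + (qy - wy * (beta + 2 * PI * r)) ^ 2
                   = beta ^ 2).
    { replace (qx - wx * (beta + 2 * PI * r)) with (beta * cos alpha)
        by (rewrite <- Hx; unfold qx, S; ring).
      replace (qy - wy * (beta + 2 * PI * r)) with (beta * sin alpha)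
        by (rewrite <- Hy; unfold qy, S; ring).
      pose proof (sin2_cos2 alpha). unfold Rsqr in *. nra. }
    assert (Hinside : (qx - wx * (beta + 2 * PI * r)) ^ 2 + (qy - wy * (beta + 2 * PI * r)) ^ 2
                      < (beta + 2 * PI * r) ^ 2) by (rewrite Hold; nra).
    pose proof (drift_distance_lt_mono wx wy qx qy (beta + 2 * PI * r) d
                 ltac:(lra) ltac:(lra) Hinside).
    lra. }
  destruct (polar_form _ _ d Hd Hdist) as (a0 & Ha0 & Hx0 & Hy0).
  destruct (split_arc_total a0 S Ha0 ltac:(unfold S; lra)) as (a & g & Hag & Hsum & Hcos & Hsin).
  unfold four_pi_arc in Hag.
  exists a, d, g. rewrite Hsum, Hcos, Hsin.
  repeat split; try lra.
  - rewrite <- Hx0. unfold qx. ring.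
  - rewrite <- Hy0. unfold qy. ring.
  - unfold S. nra.
Qed.

Lemma LSL_shorten r wx wy xf yf thf alpha beta gamma :
  0 < r -> wx ^ 2 + wy ^ 2 < 1 ->
  LSL_reaches r wx wy xf yf thf alpha beta gamma ->
  four_pi_arc alpha gamma -> 4 * PI <= alpha + gamma ->
  exists a b g, LSL_reaches r wx wy xf yf thf a b g /\ four_pi_arc a g /\
    travel_time r a b g < travel_time r alpha beta gamma.
Proof.
  intros Hr Hw (Ha & Hb & Hg & k & Hturns & Hx & Hy) Harc Hlong.
  destruct (straight_segment_shorten r wx wy (xf - r * sin thf) (yf - r * (1 - cos thf))
              alpha beta gamma Hr Hw Harc Hlong Hb ltac:(lra) ltac:(lra))
    as (a & b & g & Hag & Hb' & Hsum & Hx' & Hy' & Hfaster).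
  exists a, b, g. split; [| split; assumption].
  destruct Hag as [Ha' Hg'].
  repeat split; try lra.
  exists (k - 1)%Z. rewrite minus_IZR. repeat split; lra.
Qed.

Lemma RSR_shorten r wx wy xf yf thf alpha beta gamma :
  0 < r -> wx ^ 2 + wy ^ 2 < 1 ->
  RSR_reaches r wx wy xf yf thf alpha beta gamma ->
  four_pi_arc alpha gamma -> 4 * PI <= alpha + gamma ->
  exists a b g, RSR_reaches r wx wy xf yf thf a b g /\ four_pi_arc a g /\
    travel_time r a b g < travel_time r alpha beta gamma.
Proof.
  intros Hr Hw (Ha & Hb & Hg & k & Hturns & Hx & Hy) Harc Hlong.
  destruct (straight_segment_shorten r wx (- wy) (xf + r * sin thf) (- (yf + r * (1 - cos thf)))
              alpha beta gamma Hr ltac:(lra) Harc Hlong Hb ltac:(lra) ltac:(lra))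
    as (a & b & g & Hag & Hb' & Hsum & Hx' & Hy' & Hfaster).
  exists a, b, g. split; [| split; assumption].
  destruct Hag as [Ha' Hg'].
  repeat split; try lra.
  exists (k + 1)%Z. rewrite plus_IZR. repeat split; lra.
Qed.

Lemma drift_speed_sq_lt_1 wx wy : sqrt (wx ^ 2 + wy ^ 2) < 1 -> wx ^ 2 + wy ^ 2 < 1.
Proof. intros Hspeed. apply sqrt_lt_0_alt. rewrite sqrt_1. exact Hspeed. Qed.

Theorem corollary2 :
  forall r wx wy xf yf thf : R,
    setting r wx wy thf ->
    (forall alpha beta gamma : R,
        LSL_reaches r wx wy xf yf thf alpha beta gamma ->
        four_pi_arc alpha gamma ->
        (forall a' b' g' : R,
            LSL_reaches r wx wy xf yf thf a' b' g' -> four_pi_arc a' g' ->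
            travel_time r alpha beta gamma <= travel_time r a' b' g') ->
        alpha + gamma < 4 * PI)
    /\
    (forall alpha beta gamma : R,
        RSR_reaches r wx wy xf yf thf alpha beta gamma ->
        four_pi_arc alpha gamma ->
        (forall a' b' g' : R,
            RSR_reaches r wx wy xf yf thf a' b' g' -> four_pi_arc a' g' ->
            travel_time r alpha beta gamma <= travel_time r a' b' g') ->
        alpha + gamma < 4 * PI).
Proof.
  intros r wx wy xf yf thf (Hr & (_ & Hspeed) & _).
  apply drift_speed_sq_lt_1 in Hspeed.
  split; intros alpha beta gamma Hreach Harc Hmin; apply Rnot_le_lt; intros Hlong.
  - destruct (LSL_shorten r wx wy xf yf thf alpha beta gamma Hr Hspeed Hreach Harc Hlong)
      as (a & b & g & Hreach' & Harc' & Hfaster).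
    specialize (Hmin a b g Hreach' Harc'). lra.
  - destruct (RSR_shorten r wx wy xf yf thf alpha beta gamma Hr Hspeed Hreach Harc Hlong)
      as (a & b & g & Hreach' & Harc' & Hfaster).
    specialize (Hmin a b g Hreach' Harc'). lra.
Qed.
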